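(* Let $q$ be an odd prime power, $n$ a positive integer with $n\mid(q-1)$, $\lambda\in\mathbb{F}_q^{*}$ with multiplicative order dividing $\frac{q-1}{n}$, and let $\alpha_1,\dots,\alpha_n\in\mathbb{F}_q^{*}$ be the (pairwise distinct) roots of $x^n-\lambda$, i.e. $x^n-\lambda=\prod_{i=1}^n(x-\alpha_i)$, in some fixed order. Let $\ell\ge0$, $\boldsymbol\eta=(\eta_0,\dots,\eta_\ell)\in\mathbb{F}_q^{\ell+1}\setminus\{\boldsymbol0\}$, let $r$ be an integer with $0\le r\le\ell$, and let $k=\frac{n-\ell-r}{2}$ be an integer with $k\ge2$. Let $\boldsymbol v=(v_1,\dots,v_n)$ with $v_i\in\{-1,1\}$ for $k\le i\le n$ and $v_i\in\mathbb{F}_q\setminus\{-1,0,1\}$ for $1\le i\le k-1$. Suppose $$1+\sum_{t=r}^{\ell}\eta_t\,\Phi_{\ell+1+r-t}\neq0,\qquad\text{where }\Phi_i=(-1)^{n-1}P\,\Omega_i\ (1\le i\le\ell+1).$$ Then the $( * )$-$(\mathcal{L},\mathcal{P})$-TGRS code $\mathcal{C}$ is an LCD code, i.e. $\mathcal{C}\cap\mathcal{C}^{\perp}=\{\boldsymbol0\}$.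
   Context: $P=\prod_{i=1}^n\alpha_i$. For an integer $t$, $S_t(x_1,\dots,x_n)$ is the complete homogeneous symmetric polynomial of degree $t$ ($S_t=0$ for $t<0$, $S_0=1$, and $S_t=\sum_{t_1+\dots+t_n=t,\,t_i\ge0}x_1^{t_1}\cdots x_n^{t_n}$ for $t\ge0$), and $\Omega_i=\sum_{t=0}^{\ell}\eta_tS_{t+1-i}(\alpha_1,\dots,\alpha_n)$. The $( * )$-$(\mathcal{L},\mathcal{P})$-TGRS code is $\mathcal{C}=\{(v_1f(\alpha_1),\dots,v_nf(\alpha_n)) : f\in\mathcal{F}_{n,k,\boldsymbol\eta}\}$, where $\mathcal{F}_{n,k,\boldsymbol\eta}=\{\sum_{i=0}^{k-1}f_ix^i+f_0\sum_{j=0}^{\ell}\eta_jx^{k+j} : f_i\in\mathbb{F}_q\}$. $\mathcal{C}^{\perp}$ is the dual with respect to the standard inner product $\sum_i x_iy_i$. *)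

From HB Require Import structures.
From mathcomp Require Import all_boot all_order all_algebra.
Set Implicit Arguments. Unset Strict Implicit. Unset Printing Implicit Defensive.
Import GRing.Theory.
Local Open Scope ring_scope.

Section TGRS.
Variable F : fieldType.

Definition complete_hsym (n : nat) (x : 'I_n -> F) (t : int) : F :=
  match t with
  | Posz m => \sum_(e : {ffun 'I_n -> 'I_m.+1} | (\sum_i (e i : nat))%N == m)
                \prod_i x i ^+ e i
  | Negz _ => 0
  end.

Definition Pprod (n : nat) (alpha : 'I_n -> F) : F := \prod_i alpha i.

Definition Omega (n l : nat) (alpha : 'I_n -> F) (eta : 'I_l.+1 -> F) (i : nat) : F :=
  \sum_(t < l.+1) eta t * complete_hsym alpha ((t : nat)%:Z + 1 - i%:Z).

Definition Phi (n l : nat) (alpha : 'I_n -> F) (eta : 'I_l.+1 -> F) (i : nat) : F :=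
  (-1) ^+ (n.-1) * Pprod alpha * Omega alpha eta i.

Definition tgrs_poly (k l : nat) (eta : 'I_l.+1 -> F) (f : nat -> F) : {poly F} :=
  \sum_(i < k) f i *: 'X^i + f 0%N *: \sum_(j < l.+1) eta j *: 'X^(k + j).

Definition in_tgrs (n k l : nat) (alpha v : 'I_n -> F) (eta : 'I_l.+1 -> F)
  (c : 'rV[F]_n) : Prop :=
  exists f : nat -> F, c = \row_i (v i * (tgrs_poly k eta f).[alpha i]).

Definition in_dual (n : nat) (C : 'rV[F]_n -> Prop) (y : 'rV[F]_n) : Prop :=
  forall c, C c -> \sum_i c 0 i * y 0 i = 0.

Definition is_LCD (n : nat) (C : 'rV[F]_n -> Prop) : Prop :=
  forall c, C c -> in_dual C c -> c = 0.

End TGRS.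

From mathcomp Require Import all_boot all_algebra fingroup cyclic ring zify.

(* The roots alpha_i of X^n - lam form a coset of the group of n-th roots of
   unity, so the power sums and the complete homogeneous polynomials of degree
   0 < s < n in the alpha_i vanish.  Hence sum_i p(alpha_i) = n (p_0 + lam p_n)
   for deg p < 2n, and Phi_i = lam eta_(i-1).
   If c = (v_i f(alpha_i)) lies in C and in its dual, pairing it with the
   codeword of g gives sum_i v_i^2 f(alpha_i) g(alpha_i) = 0.  For g = X h with
   deg h < k - 1 the term sum_i (fg)(alpha_i) vanishes, leaving only the
   indices i < k where v_i^2 <> 1; suitable choices of h then force
   f(alpha_i) = 0 for i < k.  Pairing with g = 1 + sum_j eta_j X^(k+j) now
   gives f_0 (1 + sum_(t >= r) eta_t Phi_(l+1+r-t)) = 0, so f_0 = 0, and f has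
   degree < k but the k roots 0, alpha_1, ..., alpha_(k-1). *)

Set Implicit Arguments.
Unset Strict Implicit.
Unset Printing Implicit Defensive.

Import GRing.Theory.
Local Open Scope ring_scope.

Lemma natr_card_eq0 (R : finNzRingType) : #|R|%:R = 0 :> R.
Proof. by have := expg_cardG (in_setT (1 : R)); rewrite cardsT. Qed.

Lemma natr_dvdn_card_pred_neq0 (F : finFieldType) n :
  (n %| #|F|.-1)%N -> n%:R != 0 :> F.
Proof.
case/dvdnP=> m card_eq; apply/eqP=> n0; have := natr_card_eq0 F.
rewrite -(prednK (ltnW (card_finNzRing_gt1 F))) card_eq mulrS natrM n0 mulr0 addr0.
by move/eqP; rewrite oner_eq0.
Qed.

Lemma scale_fixed_eq0 (R : idomainType) (c x : R) : c != 1 -> x = c * x -> x = 0.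
Proof.
move=> c_neq1 x_eq; apply/eqP.
have : (1 - c) * x == 0 by rewrite mulrBl mul1r -x_eq subrr.
by rewrite mulf_eq0 subr_eq0 eq_sym (negbTE c_neq1).
Qed.

Section CompleteHomogeneous.
Variables (F : fieldType) (n : nat).
Implicit Types (x y : 'I_n -> F).

Lemma complete_hsym0 x : complete_hsym x (Posz 0) = 1.
Proof.
rewrite /complete_hsym (big_pred1 [ffun=> ord0]).
  by apply: big1 => i _; rewrite ffunE expr0.
move=> e /=; apply/idP/eqP => [e_sum|->].
  by apply/ffunP => i; rewrite ffunE; apply/val_inj; case: (e i) => -[].
by rewrite big1 // => i _; rewrite ffunE.
Qed.

Lemma complete_hsymZ x y g m :
  (forall i, y i = g * x i) ->
  complete_hsym y (Posz m) = g ^+ m * complete_hsym x (Posz m).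
Proof.
move=> y_eq; rewrite /complete_hsym mulr_sumr; apply: eq_bigr => e /eqP e_sum.
rewrite -[X in g ^+ X]e_sum -prodrXr -big_split /=; apply: eq_bigr => i _.
by rewrite y_eq exprMn.
Qed.

Lemma complete_hsym_perm x (s : 'I_n -> 'I_n) m :
  injective s -> complete_hsym (fun i => x (s i)) (Posz m) = complete_hsym x (Posz m).
Proof.
move=> s_inj; have [t st ts] := injF_bij s_inj.
have t_inj : injective (fun e : {ffun 'I_n -> 'I_m.+1} => [ffun i => e (t i)]).
  by move=> e1 e2 /ffunP e12; apply/ffunP => j; have := e12 (s j); rewrite !ffunE st.
rewrite /complete_hsym [RHS](reindex_inj t_inj) /=.
apply: eq_big => [e|e _]; first congr (_ == _).
all: by rewrite [RHS](reindex_inj s_inj) /=; apply: eq_bigr => i _; rewrite ffunE st.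
Qed.

End CompleteHomogeneous.

Section BinomialRoots.
Variables (F : fieldType) (n : nat) (lam : F) (alpha : 'I_n -> F).
Hypotheses (n_gt0 : (0 < n)%N) (lam_neq0 : lam != 0) (alpha_inj : injective alpha).
Hypothesis binom_prod : 'X^n - lam%:P = \prod_(i < n) ('X - (alpha i)%:P).

Lemma alpha_expn i : alpha i ^+ n = lam.
Proof.
have /eqP := congr1 (horner^~ (alpha i)) binom_prod.
by rewrite horner_prod (bigD1 i) //= !hornerE subrr mul0r subr_eq0 => /eqP.
Qed.

Lemma alpha_neq0 i : alpha i != 0.
Proof.
apply: contra_eq_neq (alpha_expn i) => ->.
by rewrite expr0n gtn_eqF // eq_sym.
Qed.

Lemma binom_root_alpha x : x ^+ n = lam -> exists i, alpha i = x.
Proof.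
move=> x_root; have := congr1 (horner^~ x) binom_prod.
rewrite horner_prod !hornerE x_root subrr => /esym/eqP/prodf_eq0 [i _].
by rewrite !hornerE subr_eq0 => /eqP ->; exists i.
Qed.

Lemma sign_Pprod_alpha : (-1) ^+ n.-1 * Pprod alpha = lam.
Proof.
have := congr1 (horner^~ 0) binom_prod.
rewrite horner_prod !hornerE expr0n gtn_eqF // mulr0n sub0r.
under eq_bigr do rewrite hornerXsubC sub0r -mulN1r.
rewrite big_split /= prodr_const card_ord -/(Pprod alpha) => lam_eq.
have -> : (-1) ^+ n.-1 = - (-1) ^+ n :> F by rewrite -(prednK n_gt0) exprS mulN1r opprK.
by rewrite mulNr -lam_eq opprK.
Qed.

(* Some ratio gam = alpha_i / alpha_0 has gam^s <> 1, since the n > s distinct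
   roots cannot all be roots of X^s - alpha_0^s. *)
Lemma alpha_rotation s : (0 < s < n)%N -> exists gam (sig : 'I_n -> 'I_n),
  [/\ injective sig, forall i, alpha (sig i) = gam * alpha i & gam ^+ s != 1].
Proof.
case/andP=> s_gt0 s_lt_n; pose i0 := Ordinal n_gt0.
have [i ratio_s] : exists i, (alpha i / alpha i0) ^+ s != 1.
  apply/existsP; apply: contraT; rewrite negb_exists => /forallP ratio_s.
  pose p := 'X^s - (alpha i0 ^+ s)%:P.
  have p_neq0 : p != 0 by rewrite -size_poly_eq0 size_XnsubC.
  have roots_p : all (root p) [seq alpha i | i <- enum 'I_n].
    apply/allP => _ /mapP [i _ ->]; move/negPn/eqP: (ratio_s i).
    rewrite exprMn exprVn => /(canRL (mulfVK (expf_neq0 s (alpha_neq0 i0)))).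
    by rewrite /root !hornerE => ->; rewrite subrr.
  have := max_poly_roots p_neq0 roots_p.
  rewrite map_inj_uniq ?enum_uniq // size_map size_enum_ord size_XnsubC //.
  by rewrite ltnS leqNgt s_lt_n => /(_ isT).
pose gam := alpha i / alpha i0.
have gam_neq0 : gam != 0 by rewrite mulf_neq0 ?invr_eq0 ?alpha_neq0.
have gam_root j : (gam * alpha j) ^+ n = lam.
  by rewrite !exprMn exprVn !alpha_expn mulfV // mul1r.
pose sig j := odflt j [pick k | alpha k == gam * alpha j].
have sigE j : alpha (sig j) = gam * alpha j.
  rewrite /sig; case: pickP => [k /eqP // | no_k].
  by have [k k_eq] := binom_root_alpha (gam_root j); have := no_k k; rewrite k_eq eqxx.
exists gam, sig; split=> // a b sig_ab.
by apply: alpha_inj; apply: (mulfI gam_neq0); rewrite -!sigE sig_ab.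
Qed.

Lemma sum_alpha_expn s : (0 < s < n)%N -> \sum_i alpha i ^+ s = 0.
Proof.
move=> /alpha_rotation [gam [sig [sig_inj sigE gam_s]]].
apply: (scale_fixed_eq0 gam_s).
rewrite {1}(reindex_inj sig_inj) mulr_sumr.
by apply: eq_bigr => i _; rewrite sigE exprMn.
Qed.

Lemma complete_hsym_alpha (z : int) : z < n%:Z -> complete_hsym alpha z = (z == 0)%:R.
Proof.
case: z => [[|m]|//] z_lt_n; first by rewrite complete_hsym0.
have /alpha_rotation [gam [sig [sig_inj sigE gam_m]]] : (0 < m.+1 < n)%N by [].
apply: (scale_fixed_eq0 gam_m).
by rewrite -(complete_hsymZ _ sigE) complete_hsym_perm.
Qed.

Lemma sum_horner_alpha_small (p : {poly F}) :
  (size p <= n)%N -> \sum_i p.[alpha i] = n%:R * p`_0.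
Proof.
move=> size_p; under eq_bigr do rewrite (horner_coef_wide _ size_p).
rewrite exchange_big /=; under eq_bigr do rewrite -mulr_sumr.
rewrite (bigD1 (Ordinal n_gt0)) //= [X in _ + X]big1 ?addr0 => [|s s_neq0].
  by under eq_bigr do rewrite expr0; rewrite sumr_const card_ord mulrC.
have s_gt0 : (0 < s)%N.
  by rewrite lt0n; move: s_neq0; apply: contra_neq => s0; apply: val_inj.
by rewrite sum_alpha_expn ?mulr0 // s_gt0 ltn_ord.
Qed.

Lemma sum_horner_alpha (p : {poly F}) :
  (size p <= n.*2)%N -> \sum_i p.[alpha i] = n%:R * (p`_0 + lam * p`_n).
Proof.
move=> size_p; have p_eq := poly_take_drop n p.
rewrite -{1}p_eq; under eq_bigr do rewrite hornerD hornerM hornerXn alpha_expn mulrC.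
rewrite big_split -mulr_sumr /= !sum_horner_alpha_small ?size_take_poly //; last first.
  by rewrite size_drop_poly leq_subLR addnn.
by rewrite coef_take_poly coef_drop_poly n_gt0 add0n; ring.
Qed.

Lemma Phi_alpha l (eta : 'I_l.+1 -> F) i : (l < n)%N -> (0 < i)%N ->
  Phi alpha eta i = lam * \sum_(t < l.+1) eta t * (t.+1 == i)%:R.
Proof.
move=> l_lt_n i_gt0; rewrite /Phi sign_Pprod_alpha; congr (_ * _).
apply: eq_bigr => t _; rewrite complete_hsym_alpha; last by have := ltn_ord t; lia.
by congr (_ * _%:R); apply/eqP/eqP; lia.
Qed.

Lemma sum_eta_Phi_alpha l r (eta : 'I_l.+1 -> F) : (r <= l)%N -> (l < n)%N ->
  \sum_(t < l.+1 | (r <= t)%N) eta t * Phi alpha eta (l.+1 + r - t) =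
  lam * \sum_(t < l.+1) \sum_(s < l.+1) eta t * eta s * ((s + t)%N == (l + r)%N)%:R.
Proof.
move=> r_le_l l_lt_n; rewrite big_mkcond mulr_sumr; apply: eq_bigr => t _.
have t_le_l := ltn_ord t; case: ifP => r_le_t.
  rewrite Phi_alpha //; last by lia.
  rewrite mulrCA mulr_sumr; congr (_ * _); apply: eq_bigr => s _.
  by rewrite mulrA; congr (_ * _%:R); apply/eqP/eqP; lia.
rewrite big1 ?mulr0 // => s _.
by rewrite (_ : (s + t)%N == _ = false) ?mulr0 //; apply/eqP; have := ltn_ord s; lia.
Qed.

End BinomialRoots.

Definition tgrs_head (F : fieldType) (k : nat) (f : nat -> F) : {poly F} :=
  \sum_(i < k) f i *: 'X^i.

Definition tgrs_tail (F : fieldType) (k l : nat) (eta : 'I_l.+1 -> F) : {poly F} :=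
  \sum_(j < l.+1) eta j *: 'X^(k + j).

Section TGRSPolynomials.
Variables (F : fieldType) (k l : nat) (eta : 'I_l.+1 -> F).
Implicit Type f : nat -> F.

Lemma tgrs_polyE f : tgrs_poly k eta f = tgrs_head k f + f 0%N *: tgrs_tail k eta.
Proof. by []. Qed.

Lemma tgrs_headE f : tgrs_head k f = \poly_(i < k) f i.
Proof. by rewrite poly_def. Qed.

Lemma size_tgrs_head f : (size (tgrs_head k f) <= k)%N.
Proof. by rewrite tgrs_headE size_poly. Qed.

Lemma size_tgrs_tail : (size (tgrs_tail k eta) <= k + l.+1)%N.
Proof.
apply: leq_trans (size_sum _ _ _) _; apply/bigmax_leqP => j _.
by rewrite (leq_trans (size_scale_leq _ _)) // size_polyXn ltn_add2l.
Qed.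

Lemma coef_tgrs_tail_sqr m : (tgrs_tail k eta ^+ 2)`_(k.*2 + m) =
  \sum_(t < l.+1) \sum_(s < l.+1) eta t * eta s * ((s + t)%N == m)%:R.
Proof.
rewrite expr2 mulr_suml coef_sum; apply: eq_bigr => t _.
rewrite mulr_sumr coef_sum; apply: eq_bigr => s _.
rewrite -scalerAl -scalerAr -exprD !coefZ coefXn mulrA.
by congr (_ * _%:R); apply/eqP/eqP; lia.
Qed.

Lemma size_tgrs_poly f : (size (tgrs_poly k eta f) <= k + l.+1)%N.
Proof.
rewrite tgrs_polyE (leq_trans (size_polyD _ _)) // geq_max.
rewrite (leq_trans (size_tgrs_head f)) ?leq_addr //=.
exact: leq_trans (size_scale_leq _ _) size_tgrs_tail.
Qed.

Lemma tgrs_poly_coef (g : {poly F}) :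
  (size g <= k)%N -> g`_0 = 0 -> tgrs_poly k eta (nth 0 g) = g.
Proof.
move=> size_g g0; rewrite tgrs_polyE g0 scale0r addr0 tgrs_headE.
apply/polyP => i; rewrite coef_poly; case: ltnP => // k_le_i.
by rewrite nth_default ?(leq_trans size_g).
Qed.

Hypothesis k_gt0 : (0 < k)%N.

Lemma coef0_tgrs_head f : (tgrs_head k f)`_0 = f 0%N.
Proof. by rewrite tgrs_headE coef_poly k_gt0. Qed.

Lemma coef0_tgrs_tail : (tgrs_tail k eta)`_0 = 0.
Proof.
rewrite coef_sum big1 // => j _.
by rewrite coefZ coefXn eq_sym gtn_eqF ?mulr0 // ltn_addr.
Qed.

Lemma coef0_tgrs_poly f : (tgrs_poly k eta f)`_0 = f 0%N.
Proof. by rewrite tgrs_polyE coefD coefZ coef0_tgrs_tail mulr0 addr0 coef0_tgrs_head. Qed.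

Lemma tgrs_poly_delta0 : tgrs_poly k eta (fun i => (i == 0)%:R) = 1 + tgrs_tail k eta.
Proof.
rewrite tgrs_polyE scale1r tgrs_headE; congr (_ + _).
apply/polyP => i; rewrite coef_poly coef1.
by case: ltnP => // /(leq_trans k_gt0); case: i.
Qed.

End TGRSPolynomials.

(* Test against [g = 'X * \prod_(j != j0) ('X - b j)], which vanishes at every
   [b j] except [b j0]. *)
Lemma weights_eq0_of_orth (R : idomainType) m (b c : 'I_m -> R) :
  injective b -> (forall j, b j != 0) ->
  (forall g : {poly R}, (size g <= m.+1)%N -> g`_0 = 0 -> \sum_j c j * g.[b j] = 0) ->
  forall j, c j = 0.
Proof.
move=> b_inj b_neq0 orth j0.
pose g := 'X * \prod_(j | j != j0) ('X - (b j)%:P).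
have g_root j : j != j0 -> g.[b j] = 0.
  move=> j_neq0; rewrite hornerM horner_prod (bigD1 j) //= hornerXsubC subrr.
  by rewrite mul0r mulr0.
have g_j0 : g.[b j0] != 0.
  rewrite hornerM mulf_neq0 ?hornerX // horner_prod prodf_seq_neq0.
  apply/allP => j _; apply/implyP => j_neq0.
  by rewrite hornerXsubC subr_eq0 (inj_eq b_inj) eq_sym.
have size_g : (size g <= m.+1)%N.
  rewrite (leq_trans (size_polyMleq _ _)) // size_polyX size_prod => [|j _]; last first.
    by rewrite polyXsubC_eq0.
  under eq_bigr do rewrite size_XsubC.
  by rewrite sum_nat_const cardC1 card_ord; have := ltn_ord j0; lia.
have := orth g size_g (coefXM _ _); rewrite (bigD1 j0) //= big1 ?addr0 => [|j /g_root ->].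
  by move/eqP; rewrite mulf_eq0 (negbTE g_j0) orbF => /eqP.
by rewrite mulr0.
Qed.

Section TGRSDual.
Variables (F : fieldType) (n k l r : nat) (lam : F) (alpha v : 'I_n -> F).
Variable eta : 'I_l.+1 -> F.
Hypotheses (n_gt0 : (0 < n)%N) (lam_neq0 : lam != 0) (alpha_inj : injective alpha).
Hypothesis binom_prod : 'X^n - lam%:P = \prod_(i < n) ('X - (alpha i)%:P).
Hypotheses (n_eq : n = (k.*2 + l + r)%N) (k_ge2 : (2 <= k)%N).
Hypothesis natr_n_neq0 : n%:R != 0 :> F.
Hypothesis v_sqr_eq1 : forall i : 'I_n, (k.-1 <= i)%N -> v i ^+ 2 = 1.
Hypothesis v_sqr_neq1 : forall i : 'I_n, (i < k.-1)%N -> v i ^+ 2 != 1.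
Hypothesis tgrs_cond : 1 + lam * (tgrs_tail k eta ^+ 2)`_n != 0.

Variable fc : nat -> F.
Local Notation f := (tgrs_poly k eta fc).
Hypothesis f_dual : in_dual (in_tgrs k alpha v eta) (\row_i (v i * f.[alpha i])).

Let sum_horner := sum_horner_alpha n_gt0 lam_neq0 alpha_inj binom_prod.
Let k_gt0 : (0 < k)%N. Proof. exact: leq_trans k_ge2. Qed.
Let k_le_n : (k.-1 <= n)%N. Proof. by rewrite n_eq; lia. Qed.

Lemma tgrs_dual_orth fc' :
  \sum_i (f * tgrs_poly k eta fc').[alpha i] +
  \sum_i (v i ^+ 2 - 1) * (f * tgrs_poly k eta fc').[alpha i] = 0.
Proof.
have g_code : in_tgrs k alpha v eta (\row_i (v i * (tgrs_poly k eta fc').[alpha i])).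
  by exists fc'.
rewrite -[RHS](f_dual g_code) -big_split.
by apply: eq_bigr => i _; rewrite !mxE hornerM /=; ring.
Qed.

Lemma tgrs_dual_weighted_orth (g : {poly F}) : (size g <= k)%N -> g`_0 = 0 ->
  \sum_i (v i ^+ 2 - 1) * f.[alpha i] * g.[alpha i] = 0.
Proof.
move=> size_g g0; have := tgrs_dual_orth (nth 0 g).
have size_fg : (size (f * g)%R <= n)%N.
  rewrite (leq_trans (size_polyMleq _ _)) // n_eq.
  have := leq_add (size_tgrs_poly k eta fc) size_g; lia.
rewrite tgrs_poly_coef // sum_horner //; last by rewrite (leq_trans size_fg) // -addnn leq_addr.
rewrite coef0M g0 mulr0 nth_default // mulr0 addr0 mulr0 add0r => orth.
by rewrite -[RHS]orth; apply: eq_bigr => i _; rewrite hornerM mulrA.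
Qed.

Lemma tgrs_dual_vanish (i : 'I_n) : (i < k.-1)%N -> f.[alpha i] = 0.
Proof.
pose w (j : 'I_k.-1) := widen_ord k_le_n j.
have w_eq0 : forall j, (v (w j) ^+ 2 - 1) * f.[alpha (w j)] = 0.
  apply: (weights_eq0_of_orth (b := alpha \o w)) => [a b /alpha_inj ab|j|g size_g g0].
  - by apply: val_inj; apply: (congr1 val ab).
  - exact: (alpha_neq0 n_gt0 lam_neq0 binom_prod).
  - rewrite prednK // in size_g; rewrite -[RHS](tgrs_dual_weighted_orth size_g g0).
    rewrite (bigID (fun i : 'I_n => (i < k.-1)%N)) /= big_ord_narrow [X in _ + X]big1 ?addr0 //.
    by move=> i'; rewrite -leqNgt => /v_sqr_eq1 ->; rewrite subrr !mul0r.
move=> i_lt; have /eqP := w_eq0 (Ordinal i_lt).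
rewrite mulf_eq0 subr_eq0 (_ : w _ = i); last exact: val_inj.
by rewrite (negbTE (v_sqr_neq1 i_lt)) => /eqP.
Qed.

Lemma tgrs_dual_sum_horner fc' : \sum_i (f * tgrs_poly k eta fc').[alpha i] = 0.
Proof.
rewrite -[RHS](tgrs_dual_orth fc') [X in _ = _ + X]big1 ?addr0 // => i _.
case: (ltnP i k.-1) => [/tgrs_dual_vanish|/v_sqr_eq1 ->].
  by rewrite hornerM => ->; rewrite mul0r mulr0.
by rewrite subrr mul0r.
Qed.

Lemma tgrs_dual_coef0 : fc 0%N = 0.
Proof.
have := tgrs_dual_sum_horner (fun i => (i == 0)%:R).
have size_f := size_tgrs_poly k eta fc.
set T := tgrs_tail k eta; rewrite tgrs_poly_delta0 // -/T.
have size_T : (size T <= k + l.+1)%N := size_tgrs_tail k eta.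
have size_1T : (size (1 + T)%R <= k + l.+1)%N.
  by rewrite (leq_trans (size_polyD _ _)) // geq_max size_poly1 size_T andbT; lia.
have size_hT : (size (tgrs_head k fc * T)%R <= n)%N.
  rewrite (leq_trans (size_polyMleq _ _)) // n_eq.
  have := leq_add (size_tgrs_head k fc) size_T; lia.
rewrite sum_horner; last first.
  rewrite (leq_trans (size_polyMleq _ _)) // n_eq.
  have := leq_add size_f size_1T; lia.
rewrite coef0M coef0_tgrs_poly // coefD coef1 coef0_tgrs_tail // addr0 mulr1.
rewrite [f * _]mulrDr mulr1 coefD (nth_default _ (leq_trans size_f _)); last by rewrite n_eq; lia.
rewrite add0r [in X in X * T]tgrs_polyE mulrDl coefD (nth_default _ size_hT) add0r.
rewrite -scalerAl coefZ -expr2 mulrCA -{1}[fc 0%N]mulr1 -mulrDr => /eqP.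
by rewrite !mulf_eq0 (negbTE natr_n_neq0) (negbTE tgrs_cond) orbF => /eqP.
Qed.

Lemma tgrs_dual_eq0 : f = 0.
Proof.
pose rs := 0 :: [seq alpha (widen_ord k_le_n j) | j <- enum 'I_k.-1].
apply: (roots_geq_poly_eq0 (rs := rs)).
- rewrite /= /root horner_coef0 coef0_tgrs_poly // tgrs_dual_coef0 eqxx /=.
  by apply/allP => _ /mapP [j _ ->]; rewrite tgrs_dual_vanish /=.
- rewrite /= map_inj_uniq ?enum_uniq ?andbT.
    apply/mapP => [[j _ /esym]]; apply/eqP.
    exact: (alpha_neq0 n_gt0 lam_neq0 binom_prod).
  by move=> a b /alpha_inj/(congr1 val) ab; apply: val_inj.
- rewrite tgrs_polyE tgrs_dual_coef0 scale0r addr0 /= size_map size_enum_ord prednK //.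
  exact: size_tgrs_head.
Qed.

End TGRSDual.

Theorem theorem4p2 (F : finFieldType) (n : nat) (lam : F)
    (alpha : 'I_n -> F) (l : nat) (eta : 'I_l.+1 -> F) (r k : nat)
    (v : 'I_n -> F) :
  odd #|F| ->
  (0 < n)%N ->
  (n %| #|F|.-1)%N ->
  lam != 0 ->
  lam ^+ (#|F|.-1 %/ n) = 1 ->
  injective alpha ->
  'X^n - lam%:P = \prod_(i < n) ('X - (alpha i)%:P) ->
  (exists j, eta j != 0) ->
  (r <= l)%N ->
  n = (k.*2 + l + r)%N ->
  (2 <= k)%N ->
  (forall i : 'I_n, (k.-1 <= i)%N -> v i = 1 \/ v i = -1) ->
  (forall i : 'I_n, (i < k.-1)%N -> v i \notin [:: -1; 0; 1]) ->
  1 + \sum_(t < l.+1 | (r <= t)%N) eta t * Phi alpha eta (l.+1 + r - t) != 0 ->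
  is_LCD (in_tgrs k alpha v eta).
Proof.
move=> _ n_gt0 n_dvd lam_neq0 _ alpha_inj binom_prod _ r_le_l n_eq k_ge2 v_pm v_other cond.
move=> _ [fc ->] c_dual; apply/rowP => i; rewrite !mxE.
have l_lt_n : (l < n)%N by rewrite n_eq; lia.
have tgrs_cond : 1 + lam * (tgrs_tail k eta ^+ 2)`_n != 0.
  move: cond; rewrite (sum_eta_Phi_alpha n_gt0 lam_neq0 alpha_inj binom_prod) //.
  by rewrite n_eq -addnA coef_tgrs_tail_sqr; apply.
have v_sqr_eq1 (j : 'I_n) : (k.-1 <= j)%N -> v j ^+ 2 = 1.
  by case/v_pm => ->; rewrite ?sqrrN expr1n.
have v_sqr_neq1 (j : 'I_n) : (j < k.-1)%N -> v j ^+ 2 != 1.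
  move/v_other; rewrite sqrf_eq1 !inE => /norP [v_neqN1 /norP [_ v_neq1]].
  by rewrite negb_or v_neq1 v_neqN1.
rewrite (tgrs_dual_eq0 n_gt0 lam_neq0 alpha_inj binom_prod n_eq k_ge2
  (natr_dvdn_card_pred_neq0 n_dvd) v_sqr_eq1 v_sqr_neq1 tgrs_cond c_dual).
by rewrite horner0 mulr0.
Qed.
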